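(* Let $a^{\mathrm o}_{\ell,m}$, $m=-\ell,\dots,\ell$, $\ell\ge0$, be the Fourier coefficients of a (realization of a) field $T^{\mathrm o}\in L_2(\mathbb{S}^2)$, i.e. $T^{\mathrm o}=\sum_{\ell\ge0}\sum_{m=-\ell}^{\ell}a^{\mathrm o}_{\ell,m}Y_{\ell,m}$. Let $(\beta_\ell)_{\ell\ge0}$ be a sequence of positive numbers and $\lambda>0$. Consider the problem \[ \min_{\mathbf a}\ \tfrac12\sum_{\ell=0}^\infty\sum_{m=-\ell}^{\ell}|a_{\ell,m}-a^{\mathrm o}_{\ell,m}|^2+\lambda\sum_{\ell=0}^\infty\beta_\ell\Big(\sum_{m=-\ell}^{\ell}|a_{\ell,m}|^2\Big)^{1/2} \] over complex sequences $\mathbf a=(a_{\ell,m})$. Write $A^{\mathrm o}_\ell:=\big(\sum_{m=-\ell}^{\ell}|a^{\mathrm o}_{\ell,m}|^2\big)^{1/2}$. Then the solution is the field $T^{\mathrm r}=\sum_{\ell=0}^\infty\sum_{m=-\ell}^{\ell}a^{\mathrm r}_{\ell,m}Y_{\ell,m}$ (in the $L_2(\Omega\times\mathbb{S}^2)$ sense when $T^{\mathrm o}$ is a random field) with, for $m=-\ell,\dots,\ell$, $\ell\ge0$, \[ a^{\mathrm r}_{\ell,m}=\begin{cases}\Big(1-\dfrac{\lambda\beta_\ell}{A^{\mathrm o}_\ell}\Big)a^{\mathrm o}_{\ell,m}, & A^{\mathrm o}_\ell>\lambda\beta_\ell,\\ 0, & A^{\mathrm o}_\ell\le\lambda\beta_\ell,\end{cases}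 \qquad A^{\mathrm r}_\ell:=\Big(\sum_{m=-\ell}^{\ell}|a^{\mathrm r}_{\ell,m}|^2\Big)^{1/2}=\begin{cases}\Big(1-\dfrac{\lambda\beta_\ell}{A^{\mathrm o}_\ell}\Big)A^{\mathrm o}_\ell, & A^{\mathrm o}_\ell>\lambda\beta_\ell,\\ 0, & A^{\mathrm o}_\ell\le\lambda\beta_\ell.\end{cases} \]
   Context: $\mathbb{S}^2$ is the unit sphere in $\mathbb{R}^3$ with surface measure $\sigma$, $\sigma(\mathbb{S}^2)=4\pi$; $\{Y_{\ell,m}\}$ is the standard complex orthonormal basis of spherical harmonics of $L_2(\mathbb{S}^2)$, and the Fourier coefficients are $a^{\mathrm o}_{\ell,m}=\int_{\mathbb{S}^2}T^{\mathrm o}\overline{Y_{\ell,m}}\,d\sigma$. When $T^{\mathrm o}$ is a random field on a probability space $(\Omega,\mathcal F,\mathbb P)$, the problem is solved realization-wise and $L_2(\Omega\times\mathbb{S}^2)$ is the $L_2$ space for the product measure $\mathbb P\otimes\sigma$. *)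

From HB Require Import structures.
From mathcomp Require Import all_boot all_order all_algebra.
From mathcomp Require Import all_classical all_reals all_analysis.
From mathcomp Require Import complex.
Set Implicit Arguments. Unset Strict Implicit. Unset Printing Implicit Defensive.
Import Order.TTheory GRing.Theory Num.Theory.
Local Open Scope ring_scope.

Definition cabs2 {R : realType} (z : R[i]) : R :=
  let: Complex x y := z in x ^+ 2 + y ^+ 2.

(* Coefficient sequences a_{l,m}, l >= 0, indexed by (l : nat) (m : int);
   only the indices m = -l, ..., l are relevant. *)
Definition coefseq (R : realType) := nat -> int -> R[i].

Definition midx (l k : nat) : int := k%:Z - l%:Z.

Definition degpow {R : realType} (a : coefseq R) (l : nat) : R :=
  \sum_(0 <= k < (2 * l).+1) cabs2 (a l (midx l k)).

Definition degnorm {R : realType} (a : coefseq R) (l : nat) : R :=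
  Num.sqrt (degpow a l).

(* The objective functional (value in the extended reals; both series have
   nonnegative terms):
   1/2 \sum_l \sum_m |a_{l,m} - ao_{l,m}|^2 + lambda \sum_l beta_l (\sum_m |a_{l,m}|^2)^{1/2} *)
Definition objective {R : realType} (ao : coefseq R) (beta : nat -> R) (lambda : R)
  (a : coefseq R) : \bar R :=
  ((2^-1)%:E * (\sum_(0 <= l <oo) (degpow (fun l m => a l m - ao l m) l)%:E)
   + lambda%:E * (\sum_(0 <= l <oo) (beta l * degnorm a l)%:E))%E.

Definition thresh {R : realType} (ao : coefseq R) (beta : nat -> R) (lambda : R)
  : coefseq R :=
  fun l m => if lambda * beta l < degnorm ao l
             then ((1 - lambda * beta l / degnorm ao l)%:C * ao l m)%C
             else 0.

(* Since the objective is a sum over degrees l, it splits into independent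
   problems  min_x 1/2 |x - v|^2 + t |x|  on C^(2l+1), with v = (ao_{l,m})_m
   and t = lambda beta_l.  The block soft-threshold p = (1 - t/|v|)_+ v solves
   it: v - p is a subgradient of t |.| at p, i.e. <x, v - p> <= t |x| for all x
   with equality at x = p, and expanding the square then shows that the term at
   any x exceeds the term at p by at least 1/2 |x - p|^2.  Summing over l gives
   minimality; comparing with a = 0 shows the minimum is finite, and then the
   summed quadratic gaps force every other minimizer to coincide with p. *)

From HB Require Import structures.
From mathcomp Require Import all_boot all_order all_algebra.
From mathcomp Require Import all_classical all_reals all_analysis.
From mathcomp Require Import complex.
From mathcomp Require Import ring lra zify.
Set Implicit Arguments. Unset Strict Implicit. Unset Printing Implicit Defensive.
Import Order.TTheory GRing.Theory Num.Theory.
Local Open Scope ring_scope.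

Section ComplexDot.
Variable R : realType.
Implicit Types (z w : R[i]) (c : R).

Definition cdot z w : R :=
  let: Complex a b := z in let: Complex a' b' := w in a * a' + b * b'.

Lemma cdotC z w : cdot z w = cdot w z.
Proof. by case: z => a b; case: w => a' b' /=; ring. Qed.

Lemma cdot0l w : cdot 0 w = 0.
Proof. by case: w => a b /=; ring. Qed.

Lemma cdotBr z w w' : cdot z (w - w') = cdot z w - cdot z w'.
Proof. by case: z => a b; case: w => c d; case: w' => e f /=; ring. Qed.

Lemma cdotZl c z w : cdot (c%:C * z)%C w = c * cdot z w.
Proof. by case: z => a b; case: w => a' b' /=; ring. Qed.

Lemma cdotxx z : cdot z z = cabs2 z.
Proof. by case: z => a b /=; ring. Qed.

Lemma cabs2B z w : cabs2 (z - w) = cabs2 z - 2 * cdot z w + cabs2 w.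
Proof. by case: z => a b; case: w => a' b' /=; ring. Qed.

Lemma cabs2N z : cabs2 (- z) = cabs2 z.
Proof. by case: z => a b /=; ring. Qed.

Lemma cabs2Z c z : cabs2 (c%:C * z)%C = c ^+ 2 * cabs2 z.
Proof. by case: z => a b /=; ring. Qed.

Lemma cabs2_ge0 z : 0 <= cabs2 z.
Proof. by case: z => a b; rewrite addr_ge0 ?sqr_ge0. Qed.

Lemma cabs2_eq0 z : (cabs2 z == 0) = (z == 0).
Proof.
case: z => a b /=; rewrite paddr_eq0 ?sqr_ge0 // !sqrf_eq0.
by apply/andP/eqP => [[/eqP-> /eqP->] | [-> ->]].
Qed.

End ComplexDot.

Section Vectors.
Variables (R : realType) (n : nat).
Implicit Types (f g h x v p : nat -> R[i]) (c s t : R).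

Definition vdot f g : R := \sum_(0 <= k < n) cdot (f k) (g k).
Definition vnorm2 f : R := \sum_(0 <= k < n) cabs2 (f k).
Definition vnorm f : R := Num.sqrt (vnorm2 f).

Lemma vdotC f g : vdot f g = vdot g f.
Proof. by apply: eq_bigr => k _; rewrite cdotC. Qed.

Lemma vdotBr f g h : vdot f (fun k => g k - h k) = vdot f g - vdot f h.
Proof. by rewrite /vdot -sumrB; apply: eq_bigr => k _; rewrite cdotBr. Qed.

Lemma vdotZl c f g : vdot (fun k => c%:C * f k)%C g = c * vdot f g.
Proof. by rewrite /vdot mulr_sumr; apply: eq_bigr => k _; rewrite cdotZl. Qed.

Lemma vdotZr c f g : vdot f (fun k => c%:C * g k)%C = c * vdot f g.
Proof. by rewrite vdotC vdotZl vdotC. Qed.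

Lemma vdotxx f : vdot f f = vnorm2 f.
Proof. by apply: eq_bigr => k _; rewrite cdotxx. Qed.

Lemma vnorm2_ge0 f : 0 <= vnorm2 f.
Proof. by apply: sumr_ge0 => k _; exact: cabs2_ge0. Qed.

Lemma vnorm2B f g :
  vnorm2 (fun k => f k - g k) = vnorm2 f - 2 * vdot f g + vnorm2 g.
Proof.
rewrite /vnorm2 /vdot mulr_sumr -sumrB -big_split /=.
by apply: eq_bigr => k _; rewrite cabs2B.
Qed.

Lemma vnorm2Z c f : vnorm2 (fun k => c%:C * f k)%C = c ^+ 2 * vnorm2 f.
Proof. by rewrite /vnorm2 mulr_sumr; apply: eq_bigr => k _; rewrite cabs2Z. Qed.

Lemma vnorm2_eq0 f : vnorm2 f = 0 -> forall k, (k < n)%N -> f k = 0.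
Proof.
move=> /eqP; rewrite psumr_eq0 => [/allP f0 k kn|k _]; last exact: cabs2_ge0.
by apply/eqP; rewrite -cabs2_eq0 (eqP (f0 k _)) // mem_index_iota.
Qed.

Lemma vnormZ c f : vnorm (fun k => c%:C * f k)%C = `|c| * vnorm f.
Proof. by rewrite /vnorm vnorm2Z sqrtrM ?sqr_ge0 // sqrtr_sqr. Qed.

Lemma vnorm_ge0 f : 0 <= vnorm f.
Proof. exact: sqrtr_ge0. Qed.

Lemma vdot_le_vnorm f g : vdot f g <= vnorm f * vnorm g.
Proof.
have [f0|f_neq0] := eqVneq (vnorm2 f) 0.
  rewrite /vdot big_nat big1 ?mulr_ge0 ?vnorm_ge0 // => k /andP[_ kn].
  by rewrite (vnorm2_eq0 f0 kn) cdot0l.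
have f_gt0 : 0 < vnorm2 f by rewrite lt_def f_neq0 vnorm2_ge0.
set a := vnorm2 f; set b := vdot f g.
have := vnorm2_ge0 (fun k => a%:C * g k - b%:C * f k)%C.
rewrite vnorm2B !vnorm2Z vdotZl vdotZr (vdotC g) -/a -/b => ge0.
have b2_le : b ^+ 2 <= a * vnorm2 g.
  by rewrite -subr_ge0 -(pmulr_rge0 _ f_gt0) -/a; nra.
rewrite -sqrtrM ?vnorm2_ge0 // (le_trans (ler_norm b)) // -sqrtr_sqr.
exact: ler_wsqrtr.
Qed.

Lemma prox_vnorm_ineq t v p :
  (forall x, vdot x (fun k => v k - p k) <= t * vnorm x) ->
  vdot p (fun k => v k - p k) = t * vnorm p ->
  forall x, 2^-1 * vnorm2 (fun k => p k - v k) + t * vnorm p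
            + 2^-1 * vnorm2 (fun k => x k - p k)
            <= 2^-1 * vnorm2 (fun k => x k - v k) + t * vnorm x.
Proof.
move=> sub_x sub_p x; have := sub_x x; move: sub_p.
rewrite !vdotBr !vnorm2B vdotxx (vdotC p v) (vdotC x p); lra.
Qed.

Lemma scale_prox_vnorm_ineq t v s : 0 <= s <= 1 ->
  (1 - s) * vnorm v <= t -> s * ((1 - s) * vnorm v) = s * t ->
  forall x, let p := fun k => (s%:C * v k)%C in
    2^-1 * vnorm2 (fun k => p k - v k) + t * vnorm p
    + 2^-1 * vnorm2 (fun k => x k - p k)
    <= 2^-1 * vnorm2 (fun k => x k - v k) + t * vnorm x.
Proof.
move=> /andP[s_ge0 s_le1] gap_le gap_eq; apply: prox_vnorm_ineq => [x|].
- rewrite vdotBr vdotZr.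
  have := vdot_le_vnorm x v; have := vnorm_ge0 x; nra.
- rewrite vdotBr !vdotZl vdotZr vdotxx vnormZ ger0_norm //.
  have vnorm2E : vnorm2 v = vnorm v ^+ 2 by rewrite sqr_sqrtr ?vnorm2_ge0.
  rewrite vnorm2E; transitivity (vnorm v * (s * ((1 - s) * vnorm v))); first ring.
  by rewrite gap_eq; ring.
Qed.

Definition shrink_factor t v : R :=
  if t < vnorm v then 1 - t / vnorm v else 0.

(* Written with the test outside the scaling, so that [thresh ao beta lambda l]
   read along [midx l] is convertible to [shrink (lambda * beta l)]. *)
Definition shrink t v : nat -> R[i] :=
  fun k => if t < vnorm v then ((1 - t / vnorm v)%:C * v k)%C else 0.

Lemma shrinkE t v : shrink t v = (fun k => (shrink_factor t v)%:C * v k)%C.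
Proof.
by apply/funext => k; rewrite /shrink /shrink_factor; case: ifP; rewrite ?mul0r.
Qed.

Lemma shrink_factor_ge0 t v : 0 <= t -> 0 <= shrink_factor t v.
Proof.
move=> t_ge0; rewrite /shrink_factor; case: ifP => // lt_tv.
by rewrite subr_ge0 ler_pdivrMr ?mul1r ?ltW // (le_lt_trans t_ge0).
Qed.

Lemma vnorm_shrink t v : 0 <= t ->
  vnorm (shrink t v) = shrink_factor t v * vnorm v.
Proof.
by move=> t_ge0; rewrite shrinkE vnormZ ger0_norm // shrink_factor_ge0.
Qed.

Lemma shrink_prox t v : 0 < t ->
  forall x, 2^-1 * vnorm2 (fun k => shrink t v k - v k) + t * vnorm (shrink t v)
            + 2^-1 * vnorm2 (fun k => x k - shrink t v k)
            <= 2^-1 * vnorm2 (fun k => x k - v k) + t * vnorm x.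
Proof.
move=> t_gt0 x; rewrite shrinkE /shrink_factor.
case: ifPn => [lt_tv|]; last first.
  rewrite -leNgt => le_vt.
  by apply: scale_prox_vnorm_ineq; rewrite ?lexx ?ler01 ?subr0 ?mul1r ?mul0r.
have v_gt0 : 0 < vnorm v := lt_trans t_gt0 lt_tv.
have u_ge0 : 0 <= t / vnorm v by rewrite divr_ge0 ?ltW.
have u_le1 : t / vnorm v <= 1 by rewrite ler_pdivrMr ?mul1r ?ltW.
have gap : (1 - (1 - t / vnorm v)) * vnorm v = t by rewrite subKr divfK ?gt_eqF.
by apply: scale_prox_vnorm_ineq; rewrite ?gap //; apply/andP; split; lra.
Qed.

End Vectors.

Lemma nneseries_le0_eq0 (R : realType) (f : nat -> R) :
  (forall n, 0 <= f n) -> (\sum_(0 <= n <oo) (f n)%:E <= 0)%E -> forall n, f n = 0.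
Proof.
move=> f_ge0 sum_le0 n; apply/eqP; rewrite eq_le f_ge0 andbT -lee_fin.
have fE_ge0 k : (0 <= (f k)%:E)%E by rewrite lee_fin.
apply: le_trans sum_le0; rewrite (@nneseriesD1 _ _ n) //.
by rewrite leeDl // nneseries_ge0.
Qed.

Lemma degpow_eq0 (R : realType) (a : coefseq R) l :
  degpow a l = 0 -> forall m, `|m| <= l%:Z -> a l m = 0.
Proof.
move=> /vnorm2_eq0 a_eq0 m; rewrite ler_norml => /andP[lm ml].
have m_shift : 0 <= m + l%:Z by lia.
have := a_eq0 (absz (m + l%:Z)); rewrite /midx gez0_abs // addrK; apply; lia.
Qed.

Section Threshold.
Variables (R : realType) (ao : coefseq R) (beta : nat -> R) (lambda : R).
Hypotheses (beta_gt0 : forall l, 0 < beta l) (lambda_gt0 : 0 < lambda).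

Local Notation ar := (thresh ao beta lambda).
Local Notation obj := (objective ao beta lambda).

Definition objective_term (a : coefseq R) l : R :=
  2^-1 * degpow (fun l m => a l m - ao l m) l + lambda * (beta l * degnorm a l).

Lemma objective_term_ge0 a l : 0 <= objective_term a l.
Proof.
by rewrite addr_ge0 ?mulr_ge0 ?invr_ge0 ?vnorm2_ge0 ?vnorm_ge0 // ltW.
Qed.

Lemma objectiveE a : obj a = (\sum_(0 <= l <oo) (objective_term a l)%:E)%E.
Proof.
under [RHS]eq_eseriesr do rewrite EFinD !EFinM.
rewrite nneseriesD => [|l _ _|l _ _]; last 2 first.
- by rewrite -EFinM lee_fin mulr_ge0 ?invr_ge0 ?vnorm2_ge0.
- by rewrite -!EFinM lee_fin mulr_ge0 ?mulr_ge0 ?vnorm_ge0 ?ltW.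
rewrite nneseriesZl => [|l _]; last by rewrite lee_fin vnorm2_ge0.
rewrite (@nneseriesZl _ (fun l => (beta l * degnorm a l)%:E)) // => l _.
by rewrite lee_fin mulr_ge0 ?vnorm_ge0 ?ltW.
Qed.

Lemma objective_term_thresh a l :
  objective_term ar l + 2^-1 * degpow (fun l m => a l m - ar l m) l
  <= objective_term a l.
Proof. by rewrite /objective_term !mulrA; apply: shrink_prox; rewrite mulr_gt0. Qed.

Lemma objective0 :
  obj (fun _ _ => 0) = ((2^-1)%:E * \sum_(0 <= l <oo) (degpow ao l)%:E)%E.
Proof.
rewrite objectiveE -nneseriesZl => [|l _]; last by rewrite lee_fin vnorm2_ge0.
apply: eq_eseriesr => l _; rewrite /objective_term.
have -> : degnorm (fun _ _ => 0 : R[i]) l = 0.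
  by rewrite /degnorm /degpow big1 ?sqrtr0 // => k _; rewrite -cdotxx cdot0l.
have -> : degpow (fun l m => 0 - ao l m) l = degpow ao l.
  by apply: eq_bigr => k _; rewrite sub0r cabs2N.
by rewrite !mulr0 addr0 EFinM.
Qed.

Lemma thresh_objective_le a : (obj ar <= obj a)%E.
Proof.
rewrite !objectiveE; apply: lee_nneseries => l.
  by rewrite lee_fin objective_term_ge0.
rewrite lee_fin => _; apply: le_trans (objective_term_thresh a l).
by rewrite lerDl mulr_ge0 ?invr_ge0 ?vnorm2_ge0.
Qed.

Lemma thresh_objective_lt_pinfty :
  (\sum_(0 <= l <oo) (degpow ao l)%:E < +oo)%E -> (obj ar < +oo)%E.
Proof.
move=> ao_fin; apply: le_lt_trans (thresh_objective_le (fun _ _ => 0)) _.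
by rewrite objective0 lte_mul_pinfty // lee_fin invr_ge0.
Qed.

Lemma thresh_objective_unique a :
  (\sum_(0 <= l <oo) (degpow ao l)%:E < +oo)%E -> (obj a <= obj ar)%E ->
  forall l m, `|m| <= l%:Z -> a l m = ar l m.
Proof.
move=> ao_fin obj_le.
set d := fun l => 2^-1 * degpow (fun l m => a l m - ar l m) l.
have d_ge0 l : 0 <= d l by rewrite mulr_ge0 ?invr_ge0 ?vnorm2_ge0.
have obj_fin : obj ar \is a fin_num.
  rewrite ge0_fin_numE ?thresh_objective_lt_pinfty // objectiveE.
  by apply: nneseries_ge0 => l _ _; rewrite lee_fin objective_term_ge0.
(* obj ar + sum_l d l <= obj a <= obj ar, with obj ar finite *)
have : (\sum_(0 <= l <oo) (d l)%:E <= 0)%E.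
  rewrite -(leeD2lE _ _ obj_fin) adde0 {1}objectiveE -nneseriesD => [|l _ _|l _ _];
    rewrite ?lee_fin ?objective_term_ge0 //.
  apply: le_trans obj_le; rewrite objectiveE; apply: lee_nneseries => [l _ _|l _].
    by rewrite lee_fin addr_ge0 ?objective_term_ge0.
  by rewrite lee_fin objective_term_thresh.
move=> /(nneseries_le0_eq0 d_ge0) d_eq0 l m lm; apply/subr0_eq.
apply: (@degpow_eq0 _ (fun l m => a l m - ar l m) l) lm.
by have /eqP := d_eq0 l; rewrite mulf_eq0 invr_eq0 pnatr_eq0 => /eqP.
Qed.

Lemma degnorm_thresh l :
  degnorm ar l = if lambda * beta l < degnorm ao l
                 then (1 - lambda * beta l / degnorm ao l) * degnorm ao l else 0.
Proof.
rewrite [LHS]vnorm_shrink ?mulr_ge0 ?ltW // /shrink_factor.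
by case: ifP; rewrite ?mul0r.
Qed.

End Threshold.

Theorem proposition3p1 (R : realType) (ao : coefseq R) (beta : nat -> R) (lambda : R)
  (hao : (\sum_(0 <= l <oo) (degpow ao l)%:E < +oo)%E)
  (hbeta : forall l, 0 < beta l) (hlambda : 0 < lambda) :
  let ar := thresh ao beta lambda in
  (* a^r is a minimizer, with finite minimal value *)
  (objective ao beta lambda ar < +oo)%E /\
  (forall a : coefseq R, (objective ao beta lambda ar <= objective ao beta lambda a)%E) /\
  (* and it is the unique minimizer (on the relevant indices |m| <= l) *)
  (forall a : coefseq R,
     (objective ao beta lambda a <= objective ao beta lambda ar)%E ->
     forall (l : nat) (m : int), `|m| <= l%:Z -> a l m = ar l m) /\
  (* explicit form of A^r_l *)
  (forall l : nat,
     degnorm ar l = if lambda * beta l < degnorm ao l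
                    then (1 - lambda * beta l / degnorm ao l) * degnorm ao l
                    else 0).
Proof.
move=> ar; split; first exact: thresh_objective_lt_pinfty.
split; first exact: thresh_objective_le.
split; last exact: degnorm_thresh.
by move=> a obj_le; exact: thresh_objective_unique.
Qed.
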